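(* Let $n\ge3$ and $m,k\ge1$ be integers, let $t,u\in\mathbb{Z}_n$ with $t^2\equiv u\pmod n$, and let $G$ be the set of all $m\times k$ matrices over $\mathbb{Z}_n$ with the operation $[a_{ij}]*[b_{ij}]=[(t a_{ij}+u b_{ij})\bmod n]$. Then $(G,* )$ is a transitively commutative AG-groupoid.
   Context: An AG-groupoid is a set with a binary operation satisfying $(a*b)*c=(c*b)*a$ for all $a,b,c$. An AG-groupoid $G$ is transitively commutative if for all $a,b,c\in G$, $a*b=b*a$ and $b*c=c*b$ imply $a*c=c*a$. *)

From mathcomp Require Import all_boot all_order all_algebra.
Set Implicit Arguments. Unset Strict Implicit. Unset Printing Implicit Defensive.
Import GRing.Theory.
Local Open Scope ring_scope.

Definition AG_groupoid (T : Type) (op : T -> T -> T) : Prop :=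
  forall a b c : T, op (op a b) c = op (op c b) a.

Definition trans_commutative (T : Type) (op : T -> T -> T) : Prop :=
  forall a b c : T, op a b = op b a -> op b c = op c b -> op a c = op c a.

(* The operation on m x k matrices over Z_n: [a_ij]*[b_ij] = [t a_ij + u b_ij mod n].
   Arithmetic in 'Z_n is already reduction mod n. *)
Definition affine_op (n m k : nat) (t u : 'Z_n) (A B : 'M['Z_n]_(m, k)) : 'M['Z_n]_(m, k) :=
  \matrix_(i < m, j < k) (t * A i j + u * B i j).

From mathcomp Require Import all_boot all_order all_algebra.
From mathcomp Require Import ring.
Local Open Scope ring_scope.
Import GRing.Theory.

(* Left invertivity needs exactly t^2 = u, and
   x and y commute iff (t - u)(x - y) = 0; the latter condition is linear in
   x - y, hence transitive. *)

Section AffineRing.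
Variables (R : comPzRingType) (t u : R).

Lemma affine_left_invertive (x y z : R) : t ^+ 2 = u ->
  t * (t * x + u * y) + u * z = t * (t * z + u * y) + u * x.
Proof. by move=> <-; ring. Qed.

Lemma affine_comm_diff (x y : R) :
  (t * x + u * y) - (t * y + u * x) = (t - u) * (x - y).
Proof. by ring. Qed.

Lemma affine_comm_diff_trans (x y z : R) :
  (t - u) * (x - y) = 0 -> (t - u) * (y - z) = 0 -> (t - u) * (x - z) = 0.
Proof.
move=> exy eyz; have -> : x - z = (x - y) + (y - z) by ring.
by rewrite mulrDr exy eyz addr0.
Qed.

End AffineRing.

Section AffineMatrix.
Variables (n m k : nat) (t u : 'Z_n).

Lemma affine_op_AG_groupoid : t ^+ 2 = u -> AG_groupoid (@affine_op n m k t u).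
Proof.
by move=> tu A B C; apply/matrixP => i j; rewrite !mxE affine_left_invertive.
Qed.

Lemma affine_op_commP (A B : 'M['Z_n]_(m, k)) :
  affine_op t u A B = affine_op t u B A <->
  forall i j, (t - u) * (A i j - B i j) = 0.
Proof.
split=> [/matrixP AB i j | AB].
  by rewrite -affine_comm_diff; have := AB i j; rewrite !mxE => ->; rewrite subrr.
apply/matrixP => i j; rewrite !mxE; apply/eqP.
by rewrite -subr_eq0 affine_comm_diff AB.
Qed.

Lemma affine_op_trans_commutative : trans_commutative (@affine_op n m k t u).
Proof.
move=> A B C /affine_op_commP AB /affine_op_commP BC; apply/affine_op_commP.
by move=> i j; exact: affine_comm_diff_trans (AB i j) (BC i j).
Qed.

End AffineMatrix.

Theorem mainTheorem6 (n m k : nat) (t u : 'Z_n) :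
  (3 <= n)%N -> (1 <= m)%N -> (1 <= k)%N -> t ^+ 2 = u ->
  AG_groupoid (@affine_op n m k t u) /\ trans_commutative (@affine_op n m k t u).
Proof.
move=> _ _ _ tu.
by split; [exact: affine_op_AG_groupoid | exact: affine_op_trans_commutative].
Qed.
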